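(* Let $n,m\ge 2$ be integers and let $P_n,P_m$ be paths on $n$ and $m$ vertices. Then $AT(P_n+_S P_m)=2$ if $n=m=2$, and $AT(P_n+_S P_m)=3$ otherwise.
   Context: For an orientation $D$, a subdigraph is Eulerian if every vertex has equal in- and outdegree in it; $D$ is an AT-orientation if the numbers of Eulerian subgraphs with an even and with an odd number of arcs differ; $AT(G)$ is the smallest $k$ such that $G$ has an AT-orientation of maximum outdegree at most $k-1$. $S(G)$ is obtained from $G$ by subdividing each edge once, with vertex set identified with $V(G)\cup E(G)$. $G+_S H$ has vertex set $(V(G)\cup E(G))\times V(H)$, with $(u_1,u_2)\sim(v_1,v_2)$ iff [$u_1=v_1\in V(G)$ and $u_2v_2\in E(H)$] or [$u_2=v_2$ and $u_1v_1\in E(S(G))$]. *)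

(* Simple graphs are given as a vertex finType with an
   adjacency relation (assumed symmetric and irreflexive). *)
From mathcomp Require Import all_boot.
Set Implicit Arguments. Unset Strict Implicit. Unset Printing Implicit Defensive.

Section Defs.
Variable T : finType.
Variable adj : rel T.

Definition is_orientation (D : rel T) : Prop :=
  (forall x y, D x y -> adj x y) /\ (forall x y, adj x y -> D x y != D y x).

Definition arcs (D : rel T) : {set T * T} := [set a | D a.1 a.2].

Definition eulerian (D : rel T) (A : {set T * T}) : bool :=
  (A \subset arcs D) &&
  [forall v, #|[set a in A | a.1 == v]| == #|[set a in A | a.2 == v]|].

Definition AT_orientation (D : rel T) : bool :=
  #|[set A | eulerian D A & ~~ odd #|A| ]| != #|[set A | eulerian D A & odd #|A| ]|.

Definition outdeg (D : rel T) (x : T) : nat := #|[set y | D x y]|.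

Definition has_AT_orientation_lt (k : nat) : Prop :=
  exists D, is_orientation D /\ AT_orientation D /\ forall x, outdeg D x < k.

Definition AT_number_is (k : nat) : Prop :=
  has_AT_orientation_lt k /\ forall j, j < k -> ~ has_AT_orientation_lt j.

Definition is_edge (e : {set T}) : bool :=
  [exists u, exists v, adj u v && (e == [set u; v])].

Definition edgeT := {e : {set T} | is_edge e}.

Definition subdiv_adj : rel (T + edgeT) := fun a b =>
  match a, b with
  | inl v, inr e => v \in val e
  | inr e, inl v => v \in val e
  | _, _ => false
  end.
End Defs.

Definition sumS_adj (T : finType) (adj : rel T) (W : finType) (adjH : rel W)
  : rel ((T + edgeT adj) * W) := fun x y =>
  (match x.1, y.1 with
   | inl u, inl v => (u == v) && adjH x.2 y.2
   | _, _ => false end)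
  || ((x.2 == y.2) && subdiv_adj x.1 y.1).

Definition path_adj (n : nat) : rel 'I_n := fun i j =>
  (i.+1 == j :> nat) || (j.+1 == i :> nat).
Arguments path_adj n : clear implicits.
Arguments sumS_adj {T} adj {W} adjH _ _.
Arguments subdiv_adj {T} adj _ _.

(* Upper bounds: ranking the vertices of P_n +_S P_m by their P_m-coordinate,
   with subdivision vertices lowest, gives an acyclic orientation (its only
   Eulerian subgraph is empty) with out-degrees at most 2; P_2 +_S P_2 is a
   6-cycle, whose cyclic orientation has the empty set and the whole cycle as
   its only Eulerian subgraphs, both of even size.
   Lower bounds: under an orientation with out-degrees at most 1 every edge is
   determined by its tail, so a subgraph has at most as many edges as
   vertices; this fails for P_2 +_S P_3 and P_3 +_S P_2, one of which lies in
   P_n +_S P_m unless n = m = 2.  Out-degree 0 is impossible in presence of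
   an edge. *)
From mathcomp Require Import all_boot zify.
Set Implicit Arguments. Unset Strict Implicit. Unset Printing Implicit Defensive.

Lemma uniq_map_refine (A B C : eqType) (f : A -> B) (g : A -> C) (s : seq A) :
  {in s &, forall p q, f p = f q -> g p = g q} -> uniq (map g s) -> uniq (map f s).
Proof.
elim: s => // a s IH fg /= /andP[ga us]; apply/andP; split; last first.
  by apply: IH => // p q ps qs; apply: fg; rewrite inE ?ps ?qs orbT.
apply/mapP=> -[q qs fq]; move/mapP: ga; apply; exists q => //.
by apply: fg; rewrite ?inE ?eqxx ?qs ?orbT.
Qed.

Section Orientations.
Variable T : finType.
Implicit Types (adj D : rel T) (A : {set T * T}).

Lemma has_AT_orientation_lt_leq adj j k :
  j <= k -> has_AT_orientation_lt adj j -> has_AT_orientation_lt adj k.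
Proof.
move=> jk [D [oD [AT od]]]; exists D; split=> //; split=> // x.
exact: leq_trans (od x) jk.
Qed.

Lemma AT_number_isP adj k :
  has_AT_orientation_lt adj k.+1 -> ~ has_AT_orientation_lt adj k ->
  AT_number_is adj k.+1.
Proof.
by move=> hk nk; split=> // j; rewrite ltnS => jk /(has_AT_orientation_lt_leq jk).
Qed.

Lemma no_AT_orientation_lt1 adj x y : adj x y -> ~ has_AT_orientation_lt adj 1.
Proof.
move=> axy [D [[_ oD] [_ od]]].
have D0 u v : D u v = false.
  apply/negbTE/negP => Duv; have := od u.
  by rewrite /outdeg ltnS leqn0 cards_eq0 => /eqP/setP/(_ v); rewrite !inE Duv.
by have := oD _ _ axy; rewrite !D0.
Qed.

Lemma eulerian_set0 D : eulerian D set0.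
Proof.
apply/andP; split; first exact: sub0set.
by apply/forallP=> v; apply/eqP; apply: eq_card => a; rewrite !inE.
Qed.

Lemma eulerian_arc D A a : eulerian D A -> a \in A -> D a.1 a.2.
Proof. by case/andP=> /subsetP sub _ /sub; rewrite inE. Qed.

Lemma eulerian_out_arc D A a :
  eulerian D A -> a \in A -> exists2 b, b \in A & b.1 = a.2.
Proof.
case/andP=> _ /forallP/(_ a.2)/eqP eqc aA.
have : 0 < #|[set b in A | b.2 == a.2]|.
  by apply/card_gt0P; exists a; rewrite inE aA eqxx.
by rewrite -eqc => /card_gt0P[b]; rewrite inE => /andP[bA /eqP]; exists b.
Qed.

Lemma AT_orientation_all_even D :
  (forall A, eulerian D A -> ~~ odd #|A|) -> AT_orientation D.
Proof.
move=> ev; rewrite /AT_orientation.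
have -> : [set A : {set T * T} | eulerian D A & odd #|A|] = set0.
  by apply/setP=> A; rewrite !inE; case: (boolP (eulerian D A)) => // /ev/negbTE ->.
rewrite cards0 -lt0n; apply/card_gt0P; exists set0.
by rewrite inE eulerian_set0 cards0.
Qed.

Lemma rank_orientation adj (r : T -> nat) :
  (forall x y, adj x y = adj y x) -> (forall x y, adj x y -> r x != r y) ->
  is_orientation adj (fun x y => adj x y && (r x < r y)).
Proof.
move=> sym neq; split=> x y; first by case/andP.
by move=> a; rewrite a -sym a /=; have := neq _ _ a; case: ltngtP.
Qed.

Lemma eulerian_rank_increasing D (r : T -> nat) A :
  (forall x y, D x y -> r x < r y) -> eulerian D A -> A = set0.
Proof.
move=> Dr EA; apply/eqP; apply: contraT => /set0Pn[a0 a0A].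
have [a aA amax] := arg_maxnP (fun a : T * T => r a.2) a0A.
have [b bA ba] := eulerian_out_arc EA aA.
have := Dr _ _ (eulerian_arc EA bA); rewrite ba => /leq_trans/(_ (amax b bA)).
by rewrite ltnn.
Qed.

Lemma AT_orientation_rank_increasing D (r : T -> nat) :
  (forall x y, D x y -> r x < r y) -> AT_orientation D.
Proof.
move=> Dr; apply: AT_orientation_all_even => A /(eulerian_rank_increasing Dr) ->.
by rewrite cards0.
Qed.

(* The only Eulerian subgraphs are the empty one and the whole cycle. *)
Lemma AT_orientation_cycle (f : T -> T) :
  (forall x y, exists k, iter k f x = y) -> ~~ odd #|T| ->
  AT_orientation (fun x y => y == f x).
Proof.
move=> conn evT; apply: AT_orientation_all_even => A EA.
have [-> | /set0Pn[a aA]] := eqVneq A set0; first by rewrite cards0.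
suff -> : A = [set (x, f x) | x in T] by rewrite card_imset // => x y [].
have step x : (x, f x) \in A -> (f x, f (f x)) \in A.
  move=> xA; have [b bA /= b1] := eulerian_out_arc EA xA.
  have /eqP b2 := eulerian_arc EA bA.
  by move: bA; rewrite [b]surjective_pairing b2 b1.
have a0 : (a.1, f a.1) \in A.
  by have /eqP <- := eulerian_arc EA aA; rewrite -surjective_pairing.
apply/setP=> -[x y]; apply/idP/imsetP => [xyA | [z _ [-> ->]]].
  by exists x => //; have /eqP <- := eulerian_arc EA xyA.
have [k <-] := conn a.1 z; elim: k => [|k IH] //=; exact: step.
Qed.

(* Distinct keys certify distinct undirected edges. *)
Definition edge_key (psi : T -> nat) (p : T * T) : nat * nat :=
  (minn (psi p.1) (psi p.2), maxn (psi p.1) (psi p.2)).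

(* With out-degrees at most one, every edge is determined by its tail, so
   distinct edges have distinct tails among the covering vertices. *)
Lemma outdeg_lt2_edges_le_vertices adj D (psi : T -> nat)
    (E : seq (T * T)) (V : seq T) :
  is_orientation adj D -> (forall x, outdeg D x < 2) ->
  {in E, forall p, adj p.1 p.2} -> {in E, forall p, (p.1 \in V) && (p.2 \in V)} ->
  uniq (map (edge_key psi) E) -> size E <= size V.
Proof.
move=> [_ orD] od adjE inV uk.
pose tail p := if D p.1 p.2 then p.1 else p.2.
pose head p := if D p.1 p.2 then p.2 else p.1.
have arc p : p \in E -> D (tail p) (head p).
  move=> /adjE /orD; rewrite /tail /head.
  by case: ifP => [Dp _ // | _]; case: (D p.2 p.1).
have key_oriented p : edge_key psi p = edge_key psi (tail p, head p).
  case: p => x y; rewrite /tail /head /edge_key /=.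
  by case: (D x y); rewrite //= minnC maxnC.
have : uniq (map tail E).
  apply: (uniq_map_refine _ uk) => p q pE qE tpq.
  rewrite key_oriented [RHS]key_oriented tpq; congr (edge_key _ (_, _)).
  have /card_le1_eqP eqD := od (tail q); apply: eqD; rewrite inE; [|rewrite -tpq]; exact: arc.
move/uniq_leq_size; rewrite size_map; apply=> _ /mapP[p pE ->].
by rewrite /tail; have /andP[] := inV _ pE; case: (D _ _).
Qed.

End Orientations.

Section PathSums.
Variables n' m' : nat.
Local Notation N := n'.+2.
Local Notation M := m'.+2.
Local Notation adjG := (sumS_adj (path_adj N) (path_adj M)).
Local Notation T := (('I_N + edgeT (path_adj N)) * 'I_M)%type.

Lemma path_edge u : u.+1 < N -> is_edge (path_adj N) [set inord u; inord u.+1].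
Proof.
move=> h; apply/existsP; exists (inord u); apply/existsP; exists (inord u.+1).
by rewrite eqxx andbT /path_adj !inordK ?eqxx // ltnW.
Qed.

(* [esub u] is the edge {u, u+1} of P_N; the default is never used. *)
Definition esub u : edgeT (path_adj N) :=
  insubd (exist (is_edge (path_adj N)) _ (@path_edge 0 isT)) [set inord u; inord u.+1].

Lemma val_esub u : u.+1 < N -> val (esub u) = [set inord u; inord u.+1].
Proof. by move=> h; rewrite val_insubd path_edge. Qed.

Definition Vx u w : T := (inl (inord u), inord w).
Definition Sx u w : T := (inr (esub u), inord w).

Lemma sumS_adj_sym x y : adjG x y = adjG y x.
Proof.
case: x y => [[u|e] w] [[v|f] z]; rewrite /sumS_adj /= ?(eq_sym w) //.
by rewrite /path_adj (orbC (w.+1 == z)) (eq_sym u).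
Qed.

Lemma adjVV u w : u < N -> w.+1 < M -> adjG (Vx u w) (Vx u w.+1).
Proof. by move=> hu hw; rewrite /sumS_adj /= eqxx /path_adj !inordK ?eqxx // ltnW. Qed.

Lemma adjSV1 u w : u.+1 < N -> w < M -> adjG (Sx u w) (Vx u w).
Proof. by move=> hu hw; rewrite /sumS_adj /= eqxx val_esub // !inE eqxx. Qed.

Lemma adjSV2 u w : u.+1 < N -> w < M -> adjG (Sx u w) (Vx u.+1 w).
Proof. by move=> hu hw; rewrite /sumS_adj /= eqxx val_esub // !inE eqxx orbT. Qed.

(* Orienting towards larger [w], and from subdivision vertices to original
   ones, leaves out-degree 1 at original vertices and 2 at subdivision ones. *)
Definition layer_rank (x : T) : nat :=
  if x.1 is inl _ then (x.2 : nat).+1 else 0.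

Lemma layer_rank_adj x y : adjG x y -> layer_rank x != layer_rank y.
Proof.
case: x y => [[u|e] w] [[v|f] z]; rewrite /sumS_adj /layer_rank /= ?andbF ?orbF //.
by case/andP=> _ /orP[] /eqP <-; apply/eqP; lia.
Qed.

Definition layer_orientation (x y : T) := adjG x y && (layer_rank x < layer_rank y).

Lemma outdeg_layer_orientation x : outdeg layer_orientation x < 3.
Proof.
rewrite /outdeg; case: x => [[u|e] w].
  apply: (@leq_ltn_trans #|[set ((inl u, inord w.+1) : T)]|); last by rewrite cards1.
  apply/subset_leq_card/subsetP => -[[v|f] z];
    rewrite !inE /layer_orientation /sumS_adj /layer_rank /= ?andbF ?orbF //.
  case/andP=> /andP[/eqP <- /orP[/eqP wz|/eqP zw]] lt; last by lia.
  by rewrite xpair_eqE eqxx /=; apply/eqP/val_inj; rewrite /= inordK wz // ltn_ord.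
case/existsP: (valP e) => a /existsP[b /andP[_ /eqP eab]].
apply: (@leq_ltn_trans #|[set ((inl a, w) : T); (inl b, w)]|).
  apply/subset_leq_card/subsetP => -[[v|f] z];
    rewrite !inE /layer_orientation /sumS_adj /layer_rank /= ?andbF ?orbF //.
  by rewrite eab !inE => /andP[/andP[/eqP <- /orP[] /eqP ->] _]; rewrite eqxx ?orbT.
by rewrite cards2; case: (_ != _).
Qed.

Lemma sumS_paths_AT_le3 : has_AT_orientation_lt adjG 3.
Proof.
exists layer_orientation; split; first exact: rank_orientation sumS_adj_sym layer_rank_adj.
split; last exact: outdeg_layer_orientation.
by apply: (@AT_orientation_rank_increasing _ _ layer_rank) => x y /andP[].
Qed.

(* Keys injective on the vertices of the copies of P_2 +_S P_3 and
   P_3 +_S P_2 used below. *)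
Definition keyPm (x : T) : nat :=
  if x.1 is inl u then 3 * u + x.2 else 6 + x.2.
Definition keyPn (x : T) : nat :=
  match x.1 with
  | inl u => u + 3 * x.2
  | inr e => 6 + 2 * x.2 + (inord 0 \notin val e)
  end.

Lemma keyPmV u w : u < N -> w < M -> keyPm (Vx u w) = 3 * u + w.
Proof. by move=> hu hw; rewrite /keyPm /= !inordK. Qed.
Lemma keyPmS u w : w < M -> keyPm (Sx u w) = 6 + w.
Proof. by move=> hw; rewrite /keyPm /= inordK. Qed.
Lemma keyPnV u w : u < N -> w < M -> keyPn (Vx u w) = u + 3 * w.
Proof. by move=> hu hw; rewrite /keyPn /= !inordK. Qed.
Lemma keyPnS0 w : w < M -> keyPn (Sx 0 w) = 6 + 2 * w.
Proof. by move=> hw; rewrite /keyPn /= val_esub // !inE eqxx /= inordK ?addn0. Qed.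
Lemma keyPnS1 w : 2 < N -> w < M -> keyPn (Sx 1 w) = 7 + 2 * w.
Proof.
move=> hn hw; rewrite /keyPn /= val_esub // !inE -!val_eqE /= !inordK //.
by rewrite addn1.
Qed.

Local Arguments keyPm : simpl never.
Local Arguments keyPn : simpl never.
Local Arguments sumS_adj : simpl never.
Local Opaque Vx Sx.

(* P_2 +_S P_3 has 9 vertices and 10 edges. *)
Lemma sumS_paths_AT_ge3_Pm : 0 < m' -> ~ has_AT_orientation_lt adjG 2.
Proof.
move=> hm [D [oD [_ od]]].
pose E := [:: (Vx 0 0, Vx 0 1); (Vx 0 1, Vx 0 2); (Vx 1 0, Vx 1 1); (Vx 1 1, Vx 1 2);
  (Sx 0 0, Vx 0 0); (Sx 0 0, Vx 1 0); (Sx 0 1, Vx 0 1); (Sx 0 1, Vx 1 1);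
  (Sx 0 2, Vx 0 2); (Sx 0 2, Vx 1 2)].
pose V := [:: Vx 0 0; Vx 0 1; Vx 0 2; Vx 1 0; Vx 1 1; Vx 1 2; Sx 0 0; Sx 0 1; Sx 0 2].
suff : size E <= size V by [].
apply: (outdeg_lt2_edges_le_vertices (psi := keyPm) oD od).
- by apply/allP; rewrite /= !adjVV ?adjSV1 ?adjSV2 //; lia.
- (* Generalizing the vertices keeps these membership tests syntactic. *)
  apply/allP; rewrite /E /V /=.
  move: (Vx 0 0) (Vx 0 1) (Vx 0 2) (Vx 1 0) (Vx 1 1) (Vx 1 2) (Sx 0 0) (Sx 0 1) (Sx 0 2).
  by move=> *; rewrite !inE !eqxx ?orbT.
- by rewrite /= /edge_key /= !keyPmV ?keyPmS //; lia.
Qed.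

(* P_3 +_S P_2 has 10 vertices and 11 edges. *)
Lemma sumS_paths_AT_ge3_Pn : 0 < n' -> ~ has_AT_orientation_lt adjG 2.
Proof.
move=> hn [D [oD [_ od]]].
pose E := [:: (Vx 0 0, Vx 0 1); (Vx 1 0, Vx 1 1); (Vx 2 0, Vx 2 1);
  (Sx 0 0, Vx 0 0); (Sx 0 0, Vx 1 0); (Sx 1 0, Vx 1 0); (Sx 1 0, Vx 2 0);
  (Sx 0 1, Vx 0 1); (Sx 0 1, Vx 1 1); (Sx 1 1, Vx 1 1); (Sx 1 1, Vx 2 1)].
pose V := [:: Vx 0 0; Vx 1 0; Vx 2 0; Vx 0 1; Vx 1 1; Vx 2 1; Sx 0 0; Sx 1 0; Sx 0 1; Sx 1 1].
suff : size E <= size V by [].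
apply: (outdeg_lt2_edges_le_vertices (psi := keyPn) oD od).
- by apply/allP; rewrite /= !adjVV ?adjSV1 ?adjSV2 //; lia.
- apply/allP; rewrite /E /V /=.
  move: (Vx 0 0) (Vx 1 0) (Vx 2 0) (Vx 0 1) (Vx 1 1) (Vx 2 1) (Sx 0 0) (Sx 1 0) (Sx 0 1) (Sx 1 1).
  by move=> *; rewrite !inE !eqxx ?orbT.
- by rewrite /= /edge_key /= !keyPnV ?keyPnS0 ?keyPnS1 //; lia.
Qed.

End PathSums.

Local Notation adjC6 := (sumS_adj (path_adj 2) (path_adj 2)).
Local Notation C6 := (('I_2 + edgeT (path_adj 2)) * 'I_2)%type.

(* P_2 +_S P_2 is the 6-cycle (0,0) (0,1) (e,1) (1,1) (1,0) (e,0). *)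
Definition c6_index (x : C6) : nat :=
  match x.1 with
  | inl u => if (u : nat) == 0 then (x.2 : nat) else 4 - x.2
  | inr _ => 5 - 3 * x.2
  end.

Definition c6_vertex (i : nat) : C6 :=
  match i with
  | 0 => Vx 0 0 0 0 | 1 => Vx 0 0 0 1 | 2 => Sx 0 0 0 1
  | 3 => Vx 0 0 1 1 | 4 => Vx 0 0 1 0 | _ => Sx 0 0 0 0
  end.

Lemma c6_index_lt x : c6_index x < 6.
Proof.
by case: x => [[u|e] w]; rewrite /c6_index /=; have := ltn_ord w; try case: ifP => _; lia.
Qed.

Lemma c6_vertexK i : i < 6 -> c6_index (c6_vertex i) = i.
Proof. by case: i => [|[|[|[|[|[|]]]]]] // _; rewrite /c6_index /c6_vertex /Vx /Sx /= ?inordK. Qed.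

Lemma edgeT_P2 (e : edgeT (path_adj 2)) : e = esub 0 0.
Proof.
apply: val_inj; rewrite val_esub //.
case/existsP: (valP e) => u /existsP[v /andP[]].
rewrite /path_adj => uv /eqP ->.
case: u v uv => [[|[|]]] // hu [[|[|]]] // hv //= _; apply/setP=> z;
  rewrite !inE -!val_eqE /= !inordK //; by case: (z : nat) => [|[|]].
Qed.

Lemma c6_indexK x : c6_vertex (c6_index x) = x.
Proof.
case: x => [[u|e] w].
  case: u => [[|[|]]] // hu; case: w => [[|[|]]] // hw;
  by rewrite /c6_vertex /c6_index /Vx /=; congr (_, _); try congr inl;
     apply: val_inj; rewrite /= inordK.
rewrite (edgeT_P2 e); case: w => [[|[|]]] // hw;
  by rewrite /c6_vertex /c6_index /Sx /=; congr (_, _); apply: val_inj; rewrite /= inordK.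
Qed.

Lemma c6_vertex_inj i j : i < 6 -> j < 6 -> (c6_vertex i == c6_vertex j) = (i == j).
Proof.
by move=> hi hj; apply/eqP/eqP => [h|->//]; rewrite -(c6_vertexK hi) -(c6_vertexK hj) h.
Qed.

Lemma adj_c6_vertex i j : i < 6 -> j < 6 ->
  adjC6 (c6_vertex i) (c6_vertex j) = (j == i.+1 %% 6) || (i == j.+1 %% 6).
Proof.
case: i => [|[|[|[|[|[|]]]]]] // _; case: j => [|[|[|[|[|[|]]]]]] // _;
  by rewrite /c6_vertex /Vx /Sx /sumS_adj /subdiv_adj /path_adj /= ?val_esub // ?inE
     -?val_eqE /= ?inordK.
Qed.

Definition c6_next (x : C6) : C6 := c6_vertex ((c6_index x).+1 %% 6).

Lemma c6_orientation : is_orientation adjC6 (fun x y => y == c6_next x).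
Proof.
split=> x y.
  move/eqP ->; rewrite -[x in adjC6 x _]c6_indexK.
  by rewrite adj_c6_vertex ?c6_index_lt ?ltn_mod ?eqxx.
rewrite -[x]c6_indexK -[y]c6_indexK /c6_next !c6_vertexK ?c6_index_lt //.
rewrite adj_c6_vertex ?c6_index_lt // !c6_vertex_inj ?c6_index_lt ?ltn_mod //.
have := c6_index_lt x; have := c6_index_lt y.
by case: (c6_index x) => [|[|[|[|[|[|]]]]]]; case: (c6_index y) => [|[|[|[|[|[|]]]]]].
Qed.

Lemma iter_c6_next k x : iter k c6_next x = c6_vertex ((c6_index x + k) %% 6).
Proof.
elim: k => [|k IH]; first by rewrite addn0 modn_small ?c6_index_lt // c6_indexK.
by rewrite iterS IH /c6_next c6_vertexK ?ltn_mod //; congr c6_vertex; lia.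
Qed.

Lemma c6_next_connected x y : exists k, iter k c6_next x = y.
Proof.
exists (c6_index y + 6 - c6_index x); rewrite iter_c6_next -[RHS]c6_indexK.
by congr c6_vertex; have := c6_index_lt x; have := c6_index_lt y; lia.
Qed.

Lemma sumS_P2_P2_AT_le2 : has_AT_orientation_lt adjC6 2.
Proof.
exists (fun x y => y == c6_next x); split; first exact: c6_orientation.
split.
  apply: AT_orientation_cycle; first exact: c6_next_connected.
  by rewrite card_prod card_ord muln2 odd_double.
move=> x; rewrite /outdeg (_ : [set y | y == c6_next x] = [set c6_next x]) ?cards1 //.
by apply/setP=> y; rewrite !inE.
Qed.

Theorem corollary3p3 (n m : nat) :
  2 <= n -> 2 <= m ->
  AT_number_is (sumS_adj (path_adj n) (path_adj m))
    (if (n == 2) && (m == 2) then 2 else 3).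
Proof.
case: n => [|[|n']] // _; case: m => [|[|m']] // _.
case: n' => [|n']; case: m' => [|m'] /=.
- apply: AT_number_isP; first exact: sumS_P2_P2_AT_le2.
  exact: no_AT_orientation_lt1 (@adjVV 0 0 0 0 isT isT).
- by apply: AT_number_isP; [exact: sumS_paths_AT_le3 | exact: sumS_paths_AT_ge3_Pm].
- by apply: AT_number_isP; [exact: sumS_paths_AT_le3 | exact: sumS_paths_AT_ge3_Pn].
- by apply: AT_number_isP; [exact: sumS_paths_AT_le3 | exact: sumS_paths_AT_ge3_Pn].
Qed.
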